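(* With the matrices defined in the context, let $\mathbf{A}=\mathbf{A_N}+\frac{2}{h^2}I_{2n(n-1)}$ and $S=\mathbf{B}\mathbf{A}^{-1}\mathbf{B}^T$. Then $$S^\dagger=S_N^\dagger+\frac{2}{h^2}(\mathbf{B}\mathbf{B}^T)^\dagger,$$ where $S_N=\mathbf{B}\mathbf{A_N}^{-1}\mathbf{B}^T$.
   Context: Fix an integer $n\ge 2$ and set $h=1/n$. Let $I_m$ denote the $m\times m$ identity matrix and $\otimes$ the Kronecker product. Let $\mathrm{B}\in\mathbb{R}^{n\times(n-1)}$ be $\mathrm{B}=\frac1h M$, where $M_{i,i}=1$ and $M_{i+1,i}=-1$ for $1\le i\le n-1$, all other entries $0$. Define $\mathrm{B}^u_x=I_n\otimes \mathrm{B}$, $\mathrm{B}^v_y=\mathrm{B}\otimes I_n$, $\mathrm{B}^q_x=I_{n-1}\otimes\mathrm{B}$, $\mathrm{B}^q_y=\mathrm{B}\otimes I_{n-1}$. Let $\mathbf{B}=\begin{bmatrix}-\mathrm{B}^u_x & -\mathrm{B}^v_y\end{bmatrix}\in\mathbb{R}^{n^2\times 2n(n-1)}$ and $\mathbf{C}=\begin{bmatrix}-(\mathrm{B}^q_y)^T & (\mathrm{B}^q_x)^T\end{bmatrix}\in\mathbb{R}^{(n-1)^2\times 2n(n-1)}$, and let $\mathbf{A_N}=\mathbf{B}^T\mathbf{B}+\mathbf{C}^T\mathbf{C}$ (invertible). The matrix $\mathbf{B}\mathbf{B}^T\in\mathbb{R}^{n^2\times n^2}$ is the pressure Laplacian with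 Neumann boundary conditions. The superscript $\dagger$ denotes the Moore–Penrose pseudoinverse. *)

From HB Require Import structures.
From mathcomp Require Import all_boot all_order all_algebra.
From mathcomp Require Import mxtens.
From Stdlib Require Import ClassicalEpsilon.
Set Implicit Arguments. Unset Strict Implicit. Unset Printing Implicit Defensive.
Import Order.TTheory GRing.Theory Num.Theory.
Local Open Scope ring_scope.

Definition is_pinv (R : realFieldType) (m k : nat) (A : 'M[R]_(m, k)) (X : 'M[R]_(k, m)) : Prop :=
  [/\ A *m X *m A = A, X *m A *m X = X, (A *m X)^T = A *m X & (X *m A)^T = X *m A].

(* The Moore--Penrose pseudoinverse A^dagger (the unique X with is_pinv A X;
   such an X always exists over a real field). *)
Definition pinv (R : realFieldType) (m k : nat) (A : 'M[R]_(m, k)) : 'M[R]_(k, m) :=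
  epsilon (inhabits 0) (is_pinv A).

(* The n x (n-1) matrix B = (1/h) M, h = 1/n: M_{i,i} = 1, M_{i+1,i} = -1 (0-based). *)
Definition Bmat (R : realFieldType) (n : nat) : 'M[R]_(n, n.-1) :=
  \matrix_(i < n, j < n.-1)
     ((n%:R : R) * (((val i == val j)%:R) - ((val i == (val j).+1)%:R))).

Section Mats.
Variables (R : realFieldType) (n : nat).
Local Notation B := (Bmat R n).

Definition Bux : 'M[R]_(n * n, n * n.-1) := (1%:M : 'M[R]_n) *t B.
Definition Bvy : 'M[R]_(n * n, n.-1 * n) := B *t (1%:M : 'M[R]_n).
Definition Bqx : 'M[R]_(n.-1 * n, n.-1 * n.-1) := (1%:M : 'M[R]_n.-1) *t B.
Definition Bqy : 'M[R]_(n * n.-1, n.-1 * n.-1) := B *t (1%:M : 'M[R]_n.-1).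

Definition BB : 'M[R]_(n * n, n * n.-1 + n.-1 * n) := row_mx (- Bux) (- Bvy).
Definition CC : 'M[R]_(n.-1 * n.-1, n * n.-1 + n.-1 * n) := row_mx (- Bqy^T) (Bqx^T).

Definition AN := BB^T *m BB + CC^T *m CC.
End Mats.

From HB Require Import structures.
From mathcomp Require Import all_boot all_order all_algebra.
From mathcomp Require Import mxtens.
From Stdlib Require Import ClassicalEpsilon.
Set Implicit Arguments. Unset Strict Implicit. Unset Printing Implicit Defensive.
Import Order.TTheory GRing.Theory Num.Theory.
Local Open Scope ring_scope.

(* Write [M = B B^T] and [c = 2 / h^2].  Since [B C^T = 0], the Hodge Laplacian
   intertwines as [(A_N + c) B^T = B^T (M + c)]; hence [S = M (M + c)^-1], and
   [S_N = M M^+] is the orthogonal projector [P] onto the range of [B], which is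
   its own pseudoinverse.  As [M^+] commutes with [M], the matrix [P + c M^+]
   satisfies the four Penrose equations for [M (M + c)^-1].  Invertibility of
   [A_N] amounts to the absence of discrete harmonic fields on the grid. *)

Section Gram.
Variable R : realFieldType.

Lemma gram_diag_ge0 m k (Z : 'M[R]_(m, k)) i : 0 <= (Z *m Z^T) i i.
Proof. by rewrite mxE; apply: sumr_ge0 => j _; rewrite mxE sqr_ge0. Qed.

Lemma gram_diag_eq0 m k (Z : 'M[R]_(m, k)) i j : (Z *m Z^T) i i = 0 -> Z i j = 0.
Proof.
rewrite mxE (eq_bigr (fun l => Z i l * Z i l)) => [|l _]; last by rewrite mxE.
move/psumr_eq0P => /(_ (fun l _ => sqr_ge0 (Z i l)) j isT) /eqP.
by rewrite mulf_eq0 orbb => /eqP.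
Qed.

Lemma gram_eq0 m k (Z : 'M[R]_(m, k)) : Z *m Z^T = 0 -> Z = 0.
Proof. by move=> Z0; apply/matrixP => i j; rewrite mxE (gram_diag_eq0 j) // Z0 mxE. Qed.

Lemma rv_gram_eq0 k (v : 'rV[R]_k) : (v *m v^T) 0 0 = 0 -> v = 0.
Proof. by move=> v0; apply/matrixP => i j; rewrite ord1 mxE (gram_diag_eq0 j v0). Qed.

Lemma gram_unitmx m k (Z : 'M[R]_(m, k)) : row_free Z -> Z *m Z^T \in unitmx.
Proof.
move=> freeZ; rewrite -row_free_unit; apply: inj_row_free => v vZ0.
have /gram_eq0/eqP : (v *m Z) *m (v *m Z)^T = 0.
  by rewrite trmx_mul !mulmxA -(mulmxA v) vZ0 mul0mx.
by rewrite (mulmx_free_eq0 _ freeZ) => /eqP.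
Qed.

Lemma gram_add_scalar_unitmx m k (Z : 'M[R]_(m, k)) c :
  0 < c -> Z *m Z^T + c%:M \in unitmx.
Proof.
move=> c_gt0; rewrite -row_free_unit; apply: inj_row_free => v v0.
have : ((v *m Z) *m (v *m Z)^T + c *: (v *m v^T)) 0 0 = 0.
  have <- : v *m (Z *m Z^T + c%:M) *m v^T = (v *m Z) *m (v *m Z)^T + c *: (v *m v^T).
    by rewrite mulmxDr mulmxDl mul_mx_scalar -scalemxAl trmx_mul !mulmxA.
  by rewrite v0 mul0mx mxE.
rewrite mxE [X in _ + X]mxE => /eqP.
rewrite (paddr_eq0 (gram_diag_ge0 _ _) (mulr_ge0 (ltW c_gt0) (gram_diag_ge0 _ _))).
by rewrite mulf_eq0 (gt_eqF c_gt0) => /andP[_ /eqP]; apply: rv_gram_eq0.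
Qed.

End Gram.

Section Pseudoinverse.
Variable R : realFieldType.

Lemma is_pinv_uniq m k (A : 'M[R]_(m, k)) X Z : is_pinv A X -> is_pinv A Z -> X = Z.
Proof.
case=> AXA XAX symAX symXA [AZA ZAZ symAZ symZA].
have XE : X = X *m A *m Z.
  have eX : X = X *m X^T *m A^T by rewrite -mulmxA -trmx_mul symAX mulmxA XAX.
  have eAt : A^T = A^T *m Z^T *m A^T by rewrite -!trmx_mul mulmxA AZA.
  rewrite {1}eX {1}eAt !mulmxA -(mulmxA X) -trmx_mul symAX.
  by rewrite -(mulmxA _ Z^T) -trmx_mul symAZ !mulmxA XAX.
have ZE : Z = X *m A *m Z.
  have eZ : Z = A^T *m Z^T *m Z by rewrite -trmx_mul symZA ZAZ.
  have eAt : A^T = A^T *m X^T *m A^T by rewrite -!trmx_mul mulmxA AXA.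
  rewrite {1}eZ eAt -trmx_mul symXA -(mulmxA _ _ Z^T) -trmx_mul symZA.
  by rewrite -!mulmxA [Z *m (A *m Z)]mulmxA ZAZ.
by rewrite XE -ZE.
Qed.

(* A full-rank factorization [F *m G] has pseudoinverse [G^+ *m F^+], with the
   one-sided inverses [G^+ = G^T (G G^T)^-1] and [F^+ = (F^T F)^-1 F^T]. *)
Lemma is_pinv_full_rank m r k (F : 'M[R]_(m, r)) (G : 'M[R]_(r, k)) :
  F^T *m F \in unitmx -> G *m G^T \in unitmx ->
  is_pinv (F *m G) (G^T *m invmx (G *m G^T) *m invmx (F^T *m F) *m F^T).
Proof.
move=> uF uG.
set iG := invmx (G *m G^T); set iF := invmx (F^T *m F).
have GiG : G *m G^T *m iG = 1%:M by rewrite mulmxV.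
have iFF : iF *m (F^T *m F) = 1%:M by rewrite mulVmx.
have symiG : iG^T = iG by rewrite trmx_inv trmx_mul trmxK.
have symiF : iF^T = iF by rewrite trmx_inv trmx_mul trmxK.
have AX : F *m G *m (G^T *m iG *m iF *m F^T) = F *m iF *m F^T.
  by rewrite !mulmxA -(mulmxA F G) -(mulmxA F) GiG mulmx1.
have XA : G^T *m iG *m iF *m F^T *m (F *m G) = G^T *m iG *m G.
  by rewrite !mulmxA -(mulmxA _ F^T F) -(mulmxA _ iF) iFF mulmx1.
split.
- by rewrite AX !mulmxA -(mulmxA _ F^T F) -(mulmxA _ iF) iFF mulmx1.
- rewrite XA !mulmxA -(mulmxA _ G G^T) -(mulmxA _ (G *m G^T)) mulmxA.
  by rewrite -(mulmxA (G^T *m iG) (G *m G^T) iG) GiG mulmx1.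
- by rewrite AX !trmx_mul trmxK symiF mulmxA.
- by rewrite XA !trmx_mul trmxK symiG mulmxA.
Qed.

Lemma pinv_exists m k (A : 'M[R]_(m, k)) : exists X, is_pinv A X.
Proof.
have uG : row_base A *m (row_base A)^T \in unitmx.
  exact/gram_unitmx/row_base_free.
have uF : (col_base A)^T *m col_base A \in unitmx.
  rewrite -{2}[col_base A]trmxK; apply: gram_unitmx.
  by rewrite /row_free mxrank_tr; apply: col_base_full.
by have := is_pinv_full_rank uF uG; rewrite mulmx_base; exact: ex_intro.
Qed.

Lemma pinvP m k (A : 'M[R]_(m, k)) : is_pinv A (pinv A).
Proof. by apply: epsilon_spec; apply: pinv_exists. Qed.

Lemma pinv_eq m k (A : 'M[R]_(m, k)) X : is_pinv A X -> pinv A = X.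
Proof. exact: is_pinv_uniq (pinvP A). Qed.

Lemma trmx_pinv m k (A : 'M[R]_(m, k)) : pinv A^T = (pinv A)^T.
Proof.
apply: pinv_eq; have [AXA XAX symAX symXA] := pinvP A; split.
- by rewrite -!trmx_mul mulmxA AXA.
- by rewrite -!trmx_mul mulmxA XAX.
- by rewrite -trmx_mul trmxK symXA.
- by rewrite -trmx_mul trmxK symAX.
Qed.

Lemma pinv_sym m (M : 'M[R]_m) : M^T = M -> (pinv M)^T = pinv M.
Proof. by move=> symM; rewrite -trmx_pinv symM. Qed.

Lemma pinv_sym_comm m (M : 'M[R]_m) : M^T = M -> M *m pinv M = pinv M *m M.
Proof.
move=> symM; have [_ _ symMY _] := pinvP M.
by rewrite -symMY trmx_mul symM pinv_sym.
Qed.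

Lemma pinv_proj m (P : 'M[R]_m) : P^T = P -> P *m P = P -> pinv P = P.
Proof. by move=> symP PP; apply: pinv_eq; split; rewrite ?PP. Qed.

End Pseudoinverse.

Section SchurComplement.
Variables (R : realFieldType) (p q r : nat) (B : 'M[R]_(p, q)) (C : 'M[R]_(r, q)).
Local Notation M := (B *m B^T).
Local Notation Y := (pinv M).
Local Notation P := (M *m Y).
Local Notation N := (B^T *m B + C^T *m C).

Lemma gram_sym : M^T = M.
Proof. by rewrite trmx_mul trmxK. Qed.

Lemma gram_proj_sym : P^T = P.
Proof. by have [] := pinvP M. Qed.

Lemma gram_proj_pinv : P *m Y = Y.
Proof. by rewrite pinv_sym_comm ?gram_sym //; have [] := pinvP M. Qed.

Lemma gram_proj_idem : P *m P = P.
Proof. by rewrite mulmxA; have [-> _ _ _] := pinvP M. Qed.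

Lemma gram_proj_mulmx : P *m B = B.
Proof.
have [MYM _ _ _] := pinvP M.
have : (B - P *m B) *m (B - P *m B)^T = 0.
  have -> : B - P *m B = (1%:M - P) *m B by rewrite mulmxBl mul1mx.
  by rewrite trmx_mul mulmxA -(mulmxA _ B) mulmxBl mul1mx MYM subrr mul0mx.
by move/gram_eq0/eqP; rewrite subr_eq0 => /eqP.
Qed.

Lemma trmx_mul_gram_proj : B^T *m P = B^T.
Proof. by rewrite -{1}gram_proj_sym -trmx_mul gram_proj_mulmx. Qed.

Lemma pinv_gram_shift c : 0 < c -> pinv (M *m invmx (M + c%:M)) = P + c *: Y.
Proof.
move=> c_gt0; have uMc : M + c%:M \in unitmx by apply: gram_add_scalar_unitmx.
have [MYM _ _ _] := pinvP M.
have YMc : P + c *: Y = Y *m (M + c%:M).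
  by rewrite mulmxDr mul_mx_scalar pinv_sym_comm ?gram_sym.
have McY : P + c *: Y = (M + c%:M) *m Y by rewrite mulmxDl mul_scalar_mx.
have SX : M *m invmx (M + c%:M) *m (P + c *: Y) = P.
  by rewrite McY -mulmxA (mulmxA (invmx _)) mulVmx // mul1mx.
have XS : (P + c *: Y) *m (M *m invmx (M + c%:M)) = P.
  have MMc : M *m (M + c%:M) = (M + c%:M) *m M.
    by rewrite mulmxDr mulmxDl mul_mx_scalar mul_scalar_mx.
  rewrite YMc -mulmxA (mulmxA _ M) -MMc -!mulmxA mulmxV // mulmx1.
  by rewrite [RHS]mulmxA pinv_sym_comm ?gram_sym.
apply: pinv_eq; split.
- by rewrite SX mulmxA MYM.
- by rewrite XS mulmxDr gram_proj_idem -scalemxAr gram_proj_pinv.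
- by rewrite SX gram_proj_sym.
- by rewrite XS gram_proj_sym.
Qed.

Hypothesis BCt0 : B *m C^T = 0.

Lemma schur_mulmx_tr : N *m B^T = B^T *m M.
Proof.
have CBt0 : C *m B^T = 0 by rewrite -[C]trmxK -trmx_mul BCt0 trmx0.
by rewrite mulmxDl -!mulmxA CBt0 mulmx0 addr0.
Qed.

Lemma schur_gram_proj : N \in unitmx -> B *m invmx N *m B^T = P.
Proof.
move=> uN; have NBtY : N *m (B^T *m Y) = B^T.
  by rewrite mulmxA schur_mulmx_tr -mulmxA trmx_mul_gram_proj.
by rewrite -mulmxA (canLR (mulKmx uN) (esym NBtY)) mulmxA.
Qed.

Lemma schur_shift c : 0 < c ->
  B *m invmx (N + c%:M) *m B^T = M *m invmx (M + c%:M).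
Proof.
move=> c_gt0; have uMc : M + c%:M \in unitmx by apply: gram_add_scalar_unitmx.
have uNc : N + c%:M \in unitmx.
  have -> : N = (col_mx B C)^T *m (col_mx B C)^T^T.
    by rewrite trmxK tr_col_mx mul_row_col.
  exact: gram_add_scalar_unitmx.
have NcBtW : (N + c%:M) *m (B^T *m invmx (M + c%:M)) = B^T.
  rewrite mulmxA mulmxDl schur_mulmx_tr mul_scalar_mx -mul_mx_scalar -mulmxDr.
  by rewrite -mulmxA mulmxV // mulmx1.
by rewrite -mulmxA (canLR (mulKmx uNc) (esym NcBtW)) mulmxA.
Qed.

End SchurComplement.

Lemma pinv_schur_shift (R : realFieldType) p q r (B : 'M[R]_(p, q)) (C : 'M[R]_(r, q)) c :
  B *m C^T = 0 -> B^T *m B + C^T *m C \in unitmx -> 0 < c ->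
  pinv (B *m invmx (B^T *m B + C^T *m C + c%:M) *m B^T) =
  pinv (B *m invmx (B^T *m B + C^T *m C) *m B^T) + c *: pinv (B *m B^T).
Proof.
move=> BCt0 uN c_gt0.
rewrite schur_shift // schur_gram_proj // pinv_gram_shift //.
by rewrite [pinv (_ *m pinv _)]pinv_proj ?gram_proj_sym ?gram_proj_idem.
Qed.

Section Tensor.
Variable R : realFieldType.

Lemma tensmx11 m k : (1%:M : 'M[R]_m) *t (1%:M : 'M[R]_k) = 1%:M.
Proof.
apply/matrixP => i j.
case: (mxtens_indexP i) => i0 i1; case: (mxtens_indexP j) => j0 j1.
rewrite tensmxE !mxE (inj_eq (can_inj (@mxtens_indexK _ _))) xpair_eqE.
by case: eqP; case: eqP; rewrite /= ?mulr0 ?mul0r ?mulr1.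
Qed.

Lemma row_free_tens m1 k1 m2 k2 (A1 : 'M[R]_(m1, k1)) (A2 : 'M[R]_(m2, k2)) :
  row_free A1 -> row_free A2 -> row_free (A1 *t A2).
Proof.
move=> /row_freeP[L1 A1L1] /row_freeP[L2 A2L2]; apply/row_freeP.
by exists (L1 *t L2); rewrite tensmx_mul A1L1 A2L2 tensmx11.
Qed.

End Tensor.

(* [row_mx (- X) (- Y)] is a divergence and [row_mx (- U^T) V^T] a curl; the
   identity [Y^T X = V U^T] says that differences in the two directions commute.
   For a field [(u, w)] with zero divergence and curl it yields
   [u (X^T X + U U^T) = 0], hence [u = 0] and then [w = 0]. *)
Lemma row_free_div_curl (R : realFieldType) k l l' s
    (X : 'M[R]_(k, l)) (Y : 'M[R]_(k, l')) (U : 'M[R]_(l, s)) (V : 'M[R]_(l', s)) :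
  row_free X^T -> row_free Y^T -> Y^T *m X = V *m U^T ->
  row_free (col_mx (row_mx (- X) (- Y)) (row_mx (- U^T) V^T))^T.
Proof.
move=> freeXt freeYt YtX; apply/inj_row_free => v.
rewrite -(hsubmxK v); set u := lsubmx v; set w := rsubmx v.
rewrite tr_col_mx !tr_row_mx !linearN /= !trmxK mul_mx_row !mul_row_col.
move/eqP; rewrite row_mx_eq0 !mulmxN subr_eq0 eqr_oppLR addrC subr_eq0.
move=> /andP[/eqP uXt /eqP/esym uU].
have : row_mx (u *m X^T) (u *m U) *m (row_mx (u *m X^T) (u *m U))^T = 0.
  rewrite tr_row_mx mul_row_col {1}uXt {1}uU !trmx_mul !trmxK mulNmx !mulmxA.
  by rewrite -[w *m Y^T *m X]mulmxA YtX !mulmxA addNr.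
move/gram_eq0/eqP; rewrite row_mx_eq0 (mulmx_free_eq0 _ freeXt) => /andP[/eqP u0 _].
move/eqP: uXt; rewrite u0 mul0mx eq_sym oppr_eq0 (mulmx_free_eq0 _ freeYt) => /eqP ->.
by rewrite row_mx0.
Qed.

Section Staggered.
Variables (R : realFieldType) (n : nat).
Local Notation G := (Bmat R n).

(* Column [j] of [x *m G^T] is [n (x_j - x_(j-1))]: [x] vanishes by induction on [j]. *)
Lemma row_free_Bmat_tr : (0 < n)%N -> row_free G^T.
Proof.
move=> n_gt0; apply/inj_row_free => x xGt0.
have n_neq0 : (n%:R : R) != 0 by rewrite pnatr_eq0 -lt0n.
suff x0 k (j : 'I_n.-1) : (val j < k)%N -> x 0 j = 0.
  by apply/matrixP => i j; rewrite ord1 mxE (x0 j.+1).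
elim: k j => [//|k IHk] j; rewrite ltnS leq_eqVlt => /orP[/eqP jk | /IHk //].
have j_lt_n : (val j < n)%N by rewrite (leq_trans (ltn_ord j)) // leq_pred.
have := congr1 (fun y : 'rV_n => y 0 (Ordinal j_lt_n)) xGt0.
rewrite !mxE (bigD1 j) //= big1 ?addr0.
  rewrite !mxE /= eqxx (ltn_eqF (ltnSn _)) subr0 mulr1.
  by move/eqP; rewrite mulf_eq0 (negPf n_neq0) orbF => /eqP.
move=> j' j'_neq_j; rewrite !mxE /=.
have -> : (val j == val j') = false.
  by apply/negbTE; apply: contra j'_neq_j => /eqP/val_inj ->.
case: eqP => [jE|_]; last by rewrite subrr !mulr0.
by rewrite IHk ?mul0r // -jk -[val j]/(nat_of_ord j) jE.
Qed.

Lemma BB_mul_CC_tr : BB R n *m (CC R n)^T = 0.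
Proof.
rewrite /BB /CC tr_row_mx mul_row_col /Bux /Bqy /Bvy /Bqx.
by rewrite !linearN /= !trmxK !mulNmx opprK !tensmx_mul !mul1mx !mulmx1 addrN.
Qed.

Lemma AN_unitmx : (0 < n)%N -> AN R n \in unitmx.
Proof.
move=> n_gt0; have freeGt := row_free_Bmat_tr n_gt0.
have -> : AN R n = (col_mx (BB R n) (CC R n))^T *m (col_mx (BB R n) (CC R n))^T^T.
  by rewrite trmxK tr_col_mx mul_row_col.
apply/gram_unitmx; rewrite /BB /CC /Bux /Bvy /Bqx /Bqy.
apply: row_free_div_curl;
  rewrite ?trmx_tens ?trmx1 ?row_free_tens ?row_free_unit ?unitmx1 //.
by rewrite !tensmx_mul !mul1mx !mulmx1.
Qed.

End Staggered.

Theorem mainTheorem10 (R : realFieldType) (n : nat) (hn : (2 <= n)%N) :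
  let h : R := 1 / n%:R in
  let A := AN R n + (2 / h ^+ 2)%:M in
  let S := BB R n *m invmx A *m (BB R n)^T in
  let SN := BB R n *m invmx (AN R n) *m (BB R n)^T in
  pinv S = pinv SN + (2 / h ^+ 2) *: pinv (BB R n *m (BB R n)^T).
Proof.
move=> h A S SN.
have n_gt0 : (0 < n)%N by rewrite (leq_trans _ hn).
have c_gt0 : 0 < 2 / h ^+ 2 by rewrite divr_gt0 ?exprn_gt0 ?divr_gt0 ?ltr0n.
exact: pinv_schur_shift (BB_mul_CC_tr R n) (AN_unitmx R n_gt0) c_gt0.
Qed.
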